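(* Let $k$ be an algebraically closed field and $\Lambda=kQ/I$ ($Q$ finite quiver, $I$ admissible ideal) satisfy condition (C) below with $n$ vertices. Then: (1) for every arrow $\alpha:i\to j$ of $Q^{\circ}$, $e_i(\operatorname{rad}\Lambda)\alpha=\alpha(\operatorname{rad}\Lambda)e_j$; (2) for vertices $i,j$ and $w\in e_i\Lambda e_j$, there exist a unique $a\in k$ and some (not necessarily unique) $l\in e_i(\operatorname{rad}\Lambda)e_i$ with $w=(ae_i+l)w^i_j$ in $\Lambda$; also there exist a unique $a'\in k$ and some $l'\in e_j(\operatorname{rad}\Lambda)e_j$ with $w=w^i_j(a'e_j+l')$; moreover $a=a'$; (3) let $f\in\operatorname{Hom}_\Lambda(P_j,P_i)$ be given by left multiplication by $w=(ae_i+l)w^i_j$ with $a\neq 0$ and $l\in e_i(\operatorname{rad}\Lambda)e_i$, and let $V\subseteq Q_0$. Then $f$ factors through $\bigoplus_{t\in V}P_t$ if and only if the path $w^j_i$ passes through some vertex $t\in V$.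
   Context: Condition (C): (a) the quiver $Q^{\circ}$ obtained from $Q$ by deleting all loops is isomorphic to the quiver with vertices $1,\dots,n$ having exactly one arrow $i\to i+1$ and one arrow $i+1\to i$ for each $1\le i\le n-1$, and no others; (b) for every arrow $x:i\to j$ of $Q$ with $i\ne j$, $x\Lambda e_j=e_i\Lambda e_j=e_i\Lambda x$; (c) for every pair $(i,j)$ of vertices, $w^i_j\ne0$ in $\Lambda$, where $w^i_j$ is the shortest path from $i$ to $j$ in $Q$ (so $w^i_j\in e_i\Lambda e_j$; paths are composed left to right, $\alpha\beta$ = first $\alpha$ then $\beta$). $P_i=e_i\Lambda$ (right modules); a morphism $P_j\to P_i$ ''given by $w\in e_i\Lambda e_j$'' sends $e_j\lambda\mapsto w\lambda$. A path ''passes through'' a vertex $t$ if $t$ is one of its vertices, endpoints included. *)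

From HB Require Import structures.
From mathcomp Require Import all_boot all_order all_algebra.

Set Implicit Arguments.
Unset Strict Implicit.
Unset Printing Implicit Defensive.

Import GRing.Theory.
Local Open Scope ring_scope.

(* (v, [::]) is the trivial path e_v; arrows are composed left to      *)
(* right: a :: b :: ... means "first a, then b, ...".                  *)
Section Quiver.
Variables (Q0 Q1 : finType) (src tgt : Q1 -> Q0).

Definition qpath := (Q0 * seq Q1)%type.

Definition is_qpath (p : qpath) : bool :=
  if p.2 is a :: s then (src a == p.1) && path (fun a b => tgt a == src b) a s
  else true.

Definition qpath_end (p : qpath) : Q0 :=
  if p.2 is a :: s then tgt (last a s) else p.1.

Definition qpath_vertices (p : qpath) : seq Q0 := p.1 :: map tgt p.2.

Definition is_qpath_from_to (p : qpath) (i j : Q0) : bool :=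
  [&& is_qpath p, p.1 == i & qpath_end p == j].

Definition shortest_qpath (p : qpath) (i j : Q0) : Prop :=
  is_qpath_from_to p i j /\
  forall q, is_qpath_from_to q i j -> (size p.2 <= size q.2)%N.

(* The "double linear" quiver with vertices 0..n-1 (standing for 1..n):
   arrows are pairs (i, b), i < n-1; (i,true) : i -> i+1 and
   (i,false) : i+1 -> i. *)
Definition stdA_src n (b : 'I_n.-1 * bool) : nat :=
  if b.2 then val b.1 else (val b.1).+1.
Definition stdA_tgt n (b : 'I_n.-1 * bool) : nat :=
  if b.2 then (val b.1).+1 else val b.1.

(* Condition (C)(a): the quiver Q° obtained from Q by deleting all loops
   is isomorphic to the double linear quiver on n vertices: a bijection
   on vertices and a bijection on (non-loop) arrows compatible with
   sources and targets. *)
Definition loopless_iso_std (n : nat) : Prop :=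
  exists (sigma : Q0 -> 'I_n)
         (tau : {a : Q1 | src a != tgt a} -> ('I_n.-1 * bool)%type),
    bijective sigma /\ bijective tau /\
    forall a, val (sigma (src (val a))) = stdA_src (tau a) /\
              val (sigma (tgt (val a))) = stdA_tgt (tau a).

End Quiver.

Section Jacobson.
Variable L : pzRingType.

Definition right_ideal (M : L -> Prop) : Prop :=
  M 0 /\ (forall u v, M u -> M v -> M (u + v)) /\
  (forall u r, M u -> M (u * r)).

Definition maximal_right_ideal (M : L -> Prop) : Prop :=
  right_ideal M /\ ~ M 1 /\
  forall N, right_ideal N -> (forall u, M u -> N u) ->
    (forall u, N u -> M u) \/ N 1.

Definition jacobson_rad (r : L) : Prop :=
  forall M, maximal_right_ideal M -> M r.

End Jacobson.

(* We describe Lambda = kQ/I through the canonical algebra map          *)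
(*   phi : kQ -> L,  e_v |-> e v,  a |-> x a                            *)
(* (well defined by the universal property of path algebras exactly     *)
(* when the relations in [is_presentation] hold). L is then kQ/I with   *)
(* I = ker phi, iff phi is surjective; I is admissible iff              *)
(* R^m <= I <= R^2 for some m >= 2 (R = arrow ideal).                   *)
(* Elements of kQ are represented by finite formal combinations         *)
(* (list of (coefficient, path)).                                       *)
Section BoundQuiverAlgebra.
Variables (k : fieldType) (L : algType k).
Variables (Q0 Q1 : finType) (src tgt : Q1 -> Q0).
Variables (e : Q0 -> L) (x : Q1 -> L).

Definition path_img (p : qpath Q0 Q1) : L := e p.1 * \prod_(a <- p.2) x a.

Definition comb_val (c : seq (k * qpath Q0 Q1)) : L :=
  \sum_(cp <- c) cp.1 *: path_img cp.2.

Definition comb_coef (c : seq (k * qpath Q0 Q1)) (p : qpath Q0 Q1) : k :=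
  \sum_(cp <- c | cp.2 == p) cp.1.

Definition valid_comb (c : seq (k * qpath Q0 Q1)) : bool :=
  all (fun cp => is_qpath src tgt cp.2) c.

(* phi : kQ -> L is a well-defined surjective algebra morphism *)
Definition is_presentation : Prop :=
  (forall t u, e t * e u = if t == u then e t else 0) /\
  \sum_t e t = 1 /\
  (forall a, x a = e (src a) * x a * e (tgt a)) /\
  (forall y : L, exists c, valid_comb c /\ y = comb_val c).

(* its kernel I is admissible: R^m <= I <= R^2 for some m >= 2 *)
Definition admissible_kernel : Prop :=
  (exists m, (2 <= m)%N /\
     forall p, is_qpath src tgt p -> (m <= size p.2)%N -> path_img p = 0) /\
  (forall c, valid_comb c -> comb_val c = 0 ->
     forall p, is_qpath src tgt p -> (size p.2 <= 1)%N -> comb_coef c p = 0).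

Definition cond_C (n : nat) : Prop :=
  loopless_iso_std src tgt n /\
  (forall a, src a != tgt a ->
     (forall y, (exists l, y = x a * l * e (tgt a)) <->
                (exists l, y = e (src a) * l * e (tgt a))) /\
     (forall y, (exists l, y = e (src a) * l * e (tgt a)) <->
                (exists l, y = e (src a) * l * x a))) /\
  (forall i j p, shortest_qpath src tgt p i j -> path_img p != 0).

Definition in_corner_rad (i : Q0) (l : L) : Prop :=
  exists r, jacobson_rad r /\ l = e i * r * e i.

Definition proj_mod (i : Q0) (y : L) : Prop := exists l, y = e i * l.

(* (+)_{t in S} P_t, realized as tuples (y_t)_t with y_t in P_t for
   t in S and y_t = 0 for t not in S, with componentwise right action *)
Definition dsum_mod (S : {set Q0}) (y : {ffun Q0 -> L}) : Prop :=
  forall t, if t \in S then proj_mod t (y t) else y t = 0.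

Definition dsum_act (y : {ffun Q0 -> L}) (r : L) : {ffun Q0 -> L} :=
  [ffun t => y t * r].

Definition ract (u r : L) : L := u * r.

Definition rhom (X Y : zmodType) (actX : X -> L -> X) (actY : Y -> L -> Y)
  (A : X -> Prop) (B : Y -> Prop) (f : X -> Y) : Prop :=
  (forall u, A u -> B (f u)) /\
  (forall u v, A u -> A v -> f (u + v) = f u + f v) /\
  (forall u r, A u -> f (actX u r) = actY (f u) r).

Definition factors_through_dsum (j i : Q0) (f : L -> L) (S : {set Q0}) : Prop :=
  exists (g : L -> {ffun Q0 -> L}) (h : {ffun Q0 -> L} -> L),
    rhom ract dsum_act (proj_mod j) (dsum_mod S) g /\
    rhom dsum_act ract (dsum_mod S) (proj_mod i) h /\
    forall u, proj_mod j u -> f u = h (g u).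

End BoundQuiverAlgebra.

From HB Require Import structures.
From mathcomp Require Import all_boot all_order all_algebra.
From mathcomp Require Import zify.
From Stdlib Require Import Classical.
Import GRing.Theory.
Local Open Scope ring_scope.
Set Implicit Arguments.
Unset Strict Implicit.
Unset Printing Implicit Defensive.

(* The arrow ideal R of Lambda (spanned by the paths of positive length) is nilpotent and,
   by admissibility, equals rad Lambda; so Lambda = (+)_t k e_t (+) R, and a Nakayama
   argument shows that c w in R w + w R forces c = 0 as soon as w <> 0.  Condition (C)(a)
   puts the vertices on a line, so every path from i to j visits all vertices between i and
   j.  Together with (C)(b) this gives, by induction along a shortest path w = w^i_j,
   e_i Lambda e_j = e_i Lambda e_i w = w e_j Lambda e_j; as w <> 0 by (C)(c), the
   coefficients of (2) exist and are unique, and (1) follows by comparing coefficients of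
   an arrow modulo R^2.  In (3), f factors through P_t for every t between i and j, i.e.
   for every vertex of w^j_i, by splitting w^i_j at t; a factorization through vertices
   outside [i, j] only reaches R w + w R, which does not contain (a e_i + l) w for a <> 0. *)

Section QuiverPaths.
Variables (Q0 Q1 : finType) (src tgt : Q1 -> Q0).

Local Notation is_path := (is_qpath src tgt).
Local Notation from_to := (is_qpath_from_to src tgt).
Local Notation qend := (qpath_end tgt).
Local Notation verts := (qpath_vertices tgt).

Lemma is_qpath_cons v a s : is_path (v, a :: s) = (src a == v) && is_path (tgt a, s).
Proof.
by rewrite /is_qpath /=; case: s => [|b s] /=; rewrite ?andbT // [tgt a == _]eq_sym.
Qed.

Lemma qpath_end_cons v a s : qend (v, a :: s) = qend (tgt a, s).
Proof. by case: s. Qed.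

Lemma qpath_vertices_cons v a s : verts (v, a :: s) = v :: verts (tgt a, s).
Proof. by []. Qed.

Lemma from_to_nil v i j : from_to (v, [::]) i j = (v == i) && (v == j).
Proof. by rewrite /is_qpath_from_to. Qed.

Lemma from_to_cons v a s i j :
  from_to (v, a :: s) i j = [&& v == i, src a == i & from_to (tgt a, s) (tgt a) j].
Proof.
rewrite /is_qpath_from_to is_qpath_cons qpath_end_cons /= eqxx.
by case: (eqVneq v i) => [->|]; rewrite ?andbF //= andbA.
Qed.

Lemma is_qpath_arrow a : is_path (src a, [:: a]).
Proof. by rewrite /is_qpath /= eqxx. Qed.

Lemma from_to_start p i j : from_to p i j -> p.1 = i.
Proof. by case/and3P=> _ /eqP. Qed.

Lemma is_qpath_cat p q :
  is_path p -> is_path q -> qend p = q.1 -> is_path (p.1, p.2 ++ q.2).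
Proof.
case: p q => v s1 [w s2] /= + Hq; elim: s1 v => [|a s1 IH] v.
  by rewrite /qpath_end => _ /= ->.
by rewrite /= !is_qpath_cons qpath_end_cons => /andP[-> /IH]; apply.
Qed.

Lemma from_to_split p i j t : from_to p i j -> t \in verts p ->
  exists s1 s2, [/\ p.2 = s1 ++ s2, from_to (i, s1) i t & from_to (t, s2) t j].
Proof.
case: p => v s; elim: s v i => [|a s IH] v i.
  rewrite from_to_nil inE => /andP[/eqP-> /eqP->] /eqP->.
  by exists [::], [::]; rewrite from_to_nil eqxx.
rewrite from_to_cons qpath_vertices_cons inE => /and3P[/eqP-> Ha Hs].
case/orP=> [/eqP->|Ht].
  by exists [::], (a :: s); rewrite from_to_nil from_to_cons Ha Hs !eqxx.
have [s1 [s2 [/= -> H1 H2]]] := IH _ _ Hs Ht.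
by exists (a :: s1), s2; rewrite from_to_cons Ha H1 eqxx.
Qed.

Definition unit_steps (pos : Q0 -> nat) : Prop :=
  forall a, (pos (src a) <= (pos (tgt a)).+1 /\ pos (tgt a) <= (pos (src a)).+1)%N.

Section LinearPositions.
Variable pos : Q0 -> nat.
Hypothesis pos_inj : injective pos.
Hypothesis pos_arrow : unit_steps pos.

Definition between (u v t : Q0) : bool :=
  (minn (pos u) (pos v) <= pos t <= maxn (pos u) (pos v))%N.

Lemma betweenl u v : between u v u.
Proof. by rewrite /between; lia. Qed.

Lemma betweenr u v : between u v v.
Proof. by rewrite /between; lia. Qed.

Lemma between_sym u v t : between u v t = between v u t.
Proof. by rewrite /between minnC maxnC. Qed.

Lemma between_trans u v w t : between u v w -> between w v t -> between u v t.
Proof. by rewrite /between; lia. Qed.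

Lemma not_between u v t : ~~ between u v t -> between u t v \/ between t v u.
Proof. by rewrite /between; lia. Qed.

Lemma between_vertex q u v t : from_to q u v -> between u v t -> t \in verts q.
Proof.
case: q => w s; elim: s w u => [|a s IH] w u.
  rewrite from_to_nil => /andP[/eqP-> /eqP<-].
  by rewrite /between minnn maxnn -eqn_leq => /eqP/pos_inj->; rewrite inE.
rewrite from_to_cons qpath_vertices_cons inE => /and3P[/eqP-> /eqP Ha Hs] Ht.
case: (eqVneq t u) => //= Htu; apply: IH Hs _.
have Hpos : pos t <> pos u by move/pos_inj; apply/eqP.
by have := pos_arrow a; rewrite Ha; move: Ht; rewrite /between; lia.
Qed.

Lemma shortest_qpath_cons v a s i j :
  shortest_qpath src tgt (v, a :: s) i j ->
  [/\ v = i, src a = i, src a != tgt a,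
      shortest_qpath src tgt (tgt a, s) (tgt a) j & between i j (tgt a)].
Proof.
move=> [Hp Hmin]; move: (Hp); rewrite from_to_cons => /and3P[/eqP-> /eqP Ha Hs].
have Hloop : src a != tgt a.
  apply/eqP=> Hl; suff: (size (a :: s) <= size s)%N by rewrite ltnn.
  by apply: (Hmin (i, s)); rewrite -Ha Hl.
have Htail : shortest_qpath src tgt (tgt a, s) (tgt a) j.
  split=> // -[w q] Hq; have /= Hw := from_to_start Hq; subst w.
  by apply: (Hmin (i, a :: q)); rewrite from_to_cons Ha Hq !eqxx.
split=> //; apply/negPn/negP=> Hout.
have Hnext : pos (tgt a) <> pos i by move/pos_inj=> H; move: Hloop; rewrite Ha H eqxx.
have Hi : between (tgt a) j i.
  by have := pos_arrow a; rewrite Ha; move: Hout; rewrite /between; lia.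
have [s1 [s2 [/= Es _ H2]]] := from_to_split Hs (between_vertex Hs Hi).
by have := Hmin (i, s2) H2; rewrite Es /= size_cat; lia.
Qed.

Lemma shortest_qpath_between q u v t :
  shortest_qpath src tgt q u v -> t \in verts q -> between u v t.
Proof.
case: q => w s; elim: s w u => [|a s IH] w u.
  move=> [+ _]; rewrite from_to_nil inE => /andP[/eqP-> _] /eqP->.
  exact: betweenl.
move/shortest_qpath_cons=> [-> _ _ Hs Hb]; rewrite qpath_vertices_cons inE.
case/orP=> [/eqP->|Ht]; first exact: betweenl.
exact: between_trans Hb (IH _ _ Hs Ht).
Qed.

End LinearPositions.

Lemma loopless_iso_std_pos n : loopless_iso_std src tgt n ->
  exists pos : Q0 -> nat, injective pos /\ unit_steps pos.
Proof.
move=> [sigma [tau [/bij_inj sigma_inj [_ Hcomp]]]].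
exists (fun v => val (sigma v)); split=> [u v /val_inj/sigma_inj //|a].
have [->|Hloop] := eqVneq (src a) (tgt a); first by split; lia.
have [-> ->] := Hcomp (exist _ a Hloop); rewrite /stdA_src /stdA_tgt.
by case: (tau _).2; split; lia.
Qed.

End QuiverPaths.

Lemma addr_eq_sub (V : zmodType) (x y u v : V) : x + u = y + v -> x - y = v - u.
Proof. by move=> H; apply/eqP; rewrite subr_eq addrAC [v + y]addrC -H addrK. Qed.

Section PathAlgebra.
Variables (k : fieldType) (L : algType k).
Variables (Q0 Q1 : finType) (src tgt : Q1 -> Q0) (e : Q0 -> L) (x : Q1 -> L).

Local Notation is_path := (is_qpath src tgt).
Local Notation from_to := (is_qpath_from_to src tgt).
Local Notation qend := (qpath_end tgt).
Local Notation verts := (qpath_vertices tgt).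
Local Notation pimg := (path_img e x).
Local Notation comb := (seq (k * qpath Q0 Q1)).

Hypothesis e_mul : forall t u, e t * e u = if t == u then e t else 0.
Hypothesis x_corner : forall a, x a = e (src a) * x a * e (tgt a).

Lemma e_idem t : e t * e t = e t.
Proof. by rewrite e_mul eqxx. Qed.

Lemma e_orth t u : t != u -> e t * e u = 0.
Proof. by rewrite e_mul => /negPf->. Qed.

Lemma mulr_e_idem y t : y * e t * e t = y * e t.
Proof. by rewrite -mulrA e_idem. Qed.

Lemma e_idem_mulr t y : e t * (e t * y) = e t * y.
Proof. by rewrite mulrA e_idem. Qed.

Lemma e_src_x a : e (src a) * x a = x a.
Proof. by rewrite x_corner !mulrA e_idem. Qed.

Lemma x_e_tgt a : x a * e (tgt a) = x a.
Proof. by rewrite x_corner -!mulrA e_idem. Qed.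

Lemma path_img_nil v : pimg (v, [::]) = e v.
Proof. by rewrite /path_img big_nil mulr1. Qed.

Lemma path_img_cons v a s : src a = v -> pimg (v, a :: s) = x a * pimg (tgt a, s).
Proof. by move=> <-; rewrite /path_img big_cons !mulrA e_src_x x_e_tgt. Qed.

Lemma path_img_arrow a : pimg (src a, [:: a]) = x a.
Proof. by rewrite path_img_cons // path_img_nil x_e_tgt. Qed.

Lemma e_path_img p : e p.1 * pimg p = pimg p.
Proof. by rewrite /path_img mulrA e_idem. Qed.

Lemma path_img_e_end p : is_path p -> pimg p * e (qend p) = pimg p.
Proof.
case: p => v s; elim: s v => [|a s IH] v; first by rewrite path_img_nil e_idem.
rewrite is_qpath_cons qpath_end_cons => /andP[/eqP Ha Hs].
by rewrite path_img_cons // -mulrA IH.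
Qed.

Lemma path_img_corner p i j : from_to p i j -> e i * pimg p * e j = pimg p.
Proof. by case/and3P=> Hp /eqP<- /eqP<-; rewrite e_path_img path_img_e_end. Qed.

Lemma from_to_e_path_img p i j : from_to p i j -> e i * pimg p = pimg p.
Proof. by move/from_to_start<-; apply: e_path_img. Qed.

Lemma from_to_path_img_e p i j : from_to p i j -> pimg p * e j = pimg p.
Proof. by case/and3P=> Hp _ /eqP<-; apply: path_img_e_end. Qed.

Lemma corner_path_img_eq0 p i j : is_path p -> ~~ from_to p i j -> e i * pimg p * e j = 0.
Proof.
rewrite /is_qpath_from_to => Hp; rewrite Hp /=.
case: (eqVneq p.1 i) => [_|Hi] /= Hj.
  by rewrite -(path_img_e_end Hp) -!mulrA e_orth ?mulr0.
by rewrite -e_path_img mulrA e_orth 1?eq_sym // !mul0r.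
Qed.

Lemma path_img_cat v s1 s2 :
  is_path (v, s1) -> pimg (v, s1 ++ s2) = pimg (v, s1) * pimg (qend (v, s1), s2).
Proof.
move=> Hp; rewrite [pimg (_, s2)]/path_img mulrA path_img_e_end //.
by rewrite /path_img big_cat /= mulrA.
Qed.

Lemma path_img_split p i j t : from_to p i j -> t \in verts p ->
  exists s1 s2, [/\ from_to (i, s1) i t, from_to (t, s2) t j &
                     pimg p = pimg (i, s1) * pimg (t, s2)].
Proof.
move=> Hft Ht; have [s1 [s2 [Ep H1 H2]]] := from_to_split Hft Ht.
exists s1, s2; split=> //; have /and3P[Hs1 _ /eqP Hend] := H1.
by rewrite -Hend -path_img_cat // -Ep -(from_to_start Hft); case: p {Hft Ht Ep}.
Qed.

Lemma path_img_mul p q : is_path p ->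
  pimg p * pimg q = if qend p == q.1 then pimg (p.1, p.2 ++ q.2) else 0.
Proof.
case: p q => v s [w t] Hp /=; case: eqP => [<-|Hw]; first by rewrite path_img_cat.
rewrite -(path_img_e_end Hp) -[pimg (w, t)]e_path_img /= mulrA.
by rewrite -(mulrA (pimg _)) e_orth ?mulr0 ?mul0r //; apply/eqP.
Qed.

Definition arrow_ideal (m : nat) (y : L) : Prop :=
  exists c : comb, [/\ valid_comb src tgt c,
    all (fun cp : k * qpath Q0 Q1 => m <= size cp.2.2)%N c & y = comb_val e x c].

Lemma arrow_ideal0 m : arrow_ideal m 0.
Proof. by exists [::]; rewrite /comb_val big_nil. Qed.

Lemma arrow_idealD m y z : arrow_ideal m y -> arrow_ideal m z -> arrow_ideal m (y + z).
Proof.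
move=> [c [Hc Hcm ->]] [d [Hd Hdm ->]]; exists (c ++ d).
by rewrite /valid_comb /comb_val !all_cat -!/(valid_comb _ _ _) Hc Hd Hcm Hdm big_cat.
Qed.

Lemma arrow_idealZ m (a : k) y : arrow_ideal m y -> arrow_ideal m (a *: y).
Proof.
move=> [c [Hc Hcm ->]]; exists [seq (a * cp.1, cp.2) | cp <- c].
rewrite /valid_comb !all_map /comb_val big_map scaler_sumr; split=> //.
by apply: eq_bigr => cp _; rewrite scalerA.
Qed.

Lemma arrow_idealN m y : arrow_ideal m y -> arrow_ideal m (- y).
Proof. by rewrite -scaleN1r; apply: arrow_idealZ. Qed.

Lemma arrow_idealB m y z : arrow_ideal m y -> arrow_ideal m z -> arrow_ideal m (y - z).
Proof. by move=> Hy /arrow_idealN; apply: arrow_idealD. Qed.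

Lemma arrow_ideal_sum m (I : Type) (r : seq I) (P : pred I) (F : I -> L) :
  (forall i, P i -> arrow_ideal m (F i)) -> arrow_ideal m (\sum_(i <- r | P i) F i).
Proof. by move=> HF; apply: big_ind => //; [apply: arrow_ideal0 | apply: arrow_idealD]. Qed.

Lemma arrow_ideal_le m m' y : (m <= m')%N -> arrow_ideal m' y -> arrow_ideal m y.
Proof.
move=> Hm [c [Hc Hcm ->]]; exists c; split=> //.
by apply/allP=> cp /(allP Hcm); apply: leq_trans.
Qed.

Lemma arrow_ideal_path p : is_path p -> arrow_ideal (size p.2) (pimg p).
Proof.
move=> Hp; exists [:: (1, p)].
by rewrite /valid_comb /= Hp leqnn /comb_val big_seq1 scale1r.
Qed.

Lemma arrow_ideal_x a : arrow_ideal 1 (x a).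
Proof. by rewrite -path_img_arrow; apply: (arrow_ideal_path (is_qpath_arrow _ _ a)). Qed.

Lemma arrow_ideal_mul m1 m2 y z :
  arrow_ideal m1 y -> arrow_ideal m2 z -> arrow_ideal (m1 + m2) (y * z).
Proof.
move=> [c [Hc Hcm ->]] [d [Hd Hdm ->]].
rewrite /comb_val big_distrl big_seq; apply: arrow_ideal_sum => cp Hcp.
rewrite big_distrr big_seq; apply: arrow_ideal_sum => dq Hdq /=.
rewrite -scalerAl -scalerAr; apply/arrow_idealZ/arrow_idealZ.
rewrite path_img_mul; last exact: (allP Hc).
case: eqP => [Hend|_]; last exact: arrow_ideal0.
apply: arrow_ideal_le (arrow_ideal_path (is_qpath_cat (allP Hc _ Hcp) (allP Hd _ Hdq) Hend)).
by rewrite size_cat leq_add ?(allP Hcm) ?(allP Hdm).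
Qed.

Hypothesis comb_surj : forall y : L, exists c, valid_comb src tgt c /\ y = comb_val e x c.

Lemma arrow_ideal_all y : arrow_ideal 0 y.
Proof. by have [c [Hc ->]] := comb_surj y; exists c; split=> //; apply/allP. Qed.

Lemma arrow_idealMl m y z : arrow_ideal m z -> arrow_ideal m (y * z).
Proof. by move=> Hz; rewrite -[m]add0n; apply: arrow_ideal_mul (arrow_ideal_all y) Hz. Qed.

Lemma arrow_idealMr m y z : arrow_ideal m y -> arrow_ideal m (y * z).
Proof. by move=> Hy; rewrite -[m]addn0; apply: arrow_ideal_mul Hy (arrow_ideal_all z). Qed.

Variable N : nat.
Hypothesis path_img_long : forall p, is_path p -> (N <= size p.2)%N -> pimg p = 0.

Lemma arrow_ideal_nil y : arrow_ideal N y -> y = 0.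
Proof.
move=> [c [Hc HcN ->]]; rewrite /comb_val big_seq big1 // => cp Hcp.
by rewrite path_img_long ?scaler0 ?(allP Hc) ?(allP HcN).
Qed.

Lemma rad_nilpotent y : arrow_ideal 1 y -> y ^+ N = 0.
Proof.
move=> Hy; apply: arrow_ideal_nil; elim: N => [|m IH]; first exact: arrow_ideal_all.
by rewrite exprSr -addn1; apply: arrow_ideal_mul.
Qed.

(* Nakayama: [p = s p + p r] puts [p] in every power of the arrow ideal. *)
Lemma arrow_ideal_sandwich_eq0 s r p :
  arrow_ideal 1 s -> arrow_ideal 1 r -> p = s * p + p * r -> p = 0.
Proof.
move=> Hs Hr Hp; apply: arrow_ideal_nil; elim: N => [|m IH]; first exact: arrow_ideal_all.
rewrite Hp; apply: arrow_idealD; first exact: (arrow_ideal_mul Hs IH).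
by rewrite -addn1; apply: arrow_ideal_mul.
Qed.

Definition radspan (p z : L) : Prop :=
  exists s r, [/\ arrow_ideal 1 s, arrow_ideal 1 r & z = s * p + p * r].

Lemma radspan0 p : radspan p 0.
Proof. by exists 0, 0; rewrite mul0r mulr0 addr0; split=> //; apply: arrow_ideal0. Qed.

Lemma radspanD p y z : radspan p y -> radspan p z -> radspan p (y + z).
Proof.
move=> [s1 [r1 [Hs1 Hr1 ->]]] [s2 [r2 [Hs2 Hr2 ->]]].
exists (s1 + s2), (r1 + r2); split; try exact: arrow_idealD.
by rewrite mulrDl mulrDr addrACA.
Qed.

Lemma radspan_mull p s : arrow_ideal 1 s -> radspan p (s * p).
Proof. by exists s, 0; rewrite mulr0 addr0; split=> //; apply: arrow_ideal0. Qed.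

Lemma radspan_mulr p r : arrow_ideal 1 r -> radspan p (p * r).
Proof. by exists 0, r; rewrite mul0r add0r; split=> //; apply: arrow_ideal0. Qed.

Lemma radspanN p z : radspan p z -> radspan p (- z).
Proof.
move=> [s [r [Hs Hr ->]]]; exists (- s), (- r).
by rewrite mulNr mulrN opprD; split=> //; apply: arrow_idealN.
Qed.

Lemma radspanB p y z : radspan p y -> radspan p z -> radspan p (y - z).
Proof. by move=> Hy /radspanN; apply: radspanD. Qed.

Lemma radspan_scale_eq0 (c : k) p : p != 0 -> radspan p (c *: p) -> c = 0.
Proof.
move=> Hp [s [r [Hs Hr Hc]]]; apply/eqP; apply: contraNT Hp => Hc0; apply/eqP.
apply: (arrow_ideal_sandwich_eq0 (s := c^-1 *: s) (r := c^-1 *: r)); try exact: arrow_idealZ.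
by rewrite -scalerAl -scalerAr -scalerDr -Hc scalerA mulVf ?scale1r.
Qed.

Hypothesis comb_coef_short : forall c, valid_comb src tgt c -> comb_val e x c = 0 ->
  forall p, is_path p -> (size p.2 <= 1)%N -> comb_coef c p = 0.

Lemma arrow_ideal_scale_short_path (c : k) p m :
  is_path p -> (size p.2 <= 1)%N -> (size p.2 < m)%N -> arrow_ideal m (c *: pimg p) -> c = 0.
Proof.
move=> Hp Hp1 Hpm [d [Hd Hdm Hcd]].
have Hv : valid_comb src tgt ((c, p) :: [seq (- dq.1, dq.2) | dq <- d]).
  by rewrite /valid_comb /= Hp all_map.
have Hval : comb_val e x ((c, p) :: [seq (- dq.1, dq.2) | dq <- d]) = 0.
  rewrite /comb_val big_cons big_map /=.
  under eq_bigr do rewrite scaleNr.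
  by rewrite sumrN -/(comb_val e x d) -Hcd subrr.
have := comb_coef_short Hv Hval Hp Hp1.
rewrite /comb_coef big_cons /= eqxx big_map big_seq_cond big_pred0 ?addr0 // => dq /=.
by apply/negP=> /andP[Hdq /eqP Edq]; move: (allP Hdm dq Hdq); rewrite Edq leqNgt Hpm.
Qed.

Lemma arrow_ideal_scale_e (c : k) t : arrow_ideal 1 (c *: e t) -> c = 0.
Proof. by rewrite -[e t]path_img_nil; apply: arrow_ideal_scale_short_path. Qed.

Lemma arrow_ideal_scale_x (c : k) a : arrow_ideal 2 (c *: x a) -> c = 0.
Proof.
by rewrite -path_img_arrow; apply: arrow_ideal_scale_short_path => //; apply: is_qpath_arrow.
Qed.

Definition vertex_comb (a : Q0 -> k) : L := \sum_t a t *: e t.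

Lemma e_vertex_comb t a : e t * vertex_comb a = a t *: e t.
Proof.
rewrite /vertex_comb mulr_sumr (bigD1 t) //= -scalerAr e_idem big1 ?addr0 // => u Hu.
by rewrite -scalerAr e_orth ?scaler0 // eq_sym.
Qed.

Lemma vertex_combD a b : vertex_comb a + vertex_comb b = vertex_comb (fun t => a t + b t).
Proof. by rewrite /vertex_comb -big_split; apply: eq_bigr => t _; rewrite scalerDl. Qed.

Lemma vertex_combM a b : vertex_comb a * vertex_comb b = vertex_comb (fun t => a t * b t).
Proof.
rewrite {1}/vertex_comb mulr_suml; apply: eq_bigr => t _.
by rewrite -scalerAl e_vertex_comb scalerA.
Qed.

Lemma corner_vertex_comb t a j : e t * (vertex_comb a + j) * e t = a t *: e t + e t * j * e t.
Proof. by rewrite mulrDr mulrDl e_vertex_comb -scalerAl e_idem. Qed.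

Lemma vertex_rad_decomp y : exists a j, arrow_ideal 1 j /\ y = vertex_comb a + j.
Proof.
pose D y := exists a j, arrow_ideal 1 j /\ y = vertex_comb a + j.
have [c [Hc ->]] := comb_surj y; rewrite /comb_val big_seq.
apply: (big_ind D).
- exists (fun _ => 0), 0; split; first exact: arrow_ideal0.
  by rewrite addr0 /vertex_comb big1 // => t _; rewrite scale0r.
- move=> _ _ [a [j [Hj ->]]] [b [j' [Hj' ->]]]; exists (fun t => a t + b t), (j + j').
  by split; [apply: arrow_idealD | rewrite addrACA vertex_combD].
move=> [c0 [v [|b s]]] Hcp.
- exists (fun t => if t == v then c0 else 0), 0; split; first exact: arrow_ideal0.
  rewrite addr0 /vertex_comb (bigD1 v) //= eqxx big1 ?addr0 ?path_img_nil // => t /negPf->.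
  by rewrite scale0r.
- exists (fun _ => 0), (c0 *: pimg (v, b :: s)); split.
    by apply/arrow_idealZ/(arrow_ideal_le _ (arrow_ideal_path (allP Hc _ Hcp))).
  by rewrite /vertex_comb big1 ?add0r // => t _; rewrite scale0r.
Qed.

Lemma vertex_rad_coef_unique a b j j' t : arrow_ideal 1 j -> arrow_ideal 1 j' ->
  vertex_comb a + j = vertex_comb b + j' -> a t = b t.
Proof.
move=> Hj Hj' /(congr1 (fun y => e t * y * e t)).
rewrite !corner_vertex_comb => /addr_eq_sub; rewrite -scalerBl -mulrBl -mulrBr => Hab.
apply/eqP; rewrite -subr_eq0; apply/eqP/(@arrow_ideal_scale_e _ t).
by rewrite Hab; apply/arrow_idealMr/arrow_idealMl/arrow_idealB.
Qed.

Lemma corner_decomp t y :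
  exists (c : k) l, arrow_ideal 1 l /\ e t * y * e t = c *: e t + e t * l * e t.
Proof.
by have [a [j [Hj ->]]] := vertex_rad_decomp y; exists (a t), j; rewrite corner_vertex_comb.
Qed.

Lemma offdiag_rad s t y : s != t -> arrow_ideal 1 (e s * y * e t).
Proof.
move=> Hst; have [a [j [Hj ->]]] := vertex_rad_decomp y.
rewrite mulrDr mulrDl e_vertex_comb -scalerAl e_orth // scaler0 add0r.
exact/arrow_idealMr/arrow_idealMl.
Qed.

Hypothesis e_sum : \sum_t e t = 1.

Lemma vertex_comb1 : vertex_comb (fun _ => 1) = 1.
Proof. by rewrite /vertex_comb -e_sum; apply: eq_bigr => t _; rewrite scale1r. Qed.

Lemma mul_one_sub_geom z : arrow_ideal 1 z -> (1 - z) * \sum_(i < N) z ^+ i = 1.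
Proof. by move=> Hz; rewrite -opprB mulNr -subrX1 rad_nilpotent // sub0r opprK. Qed.

Lemma arrow_ideal_jacobson r : arrow_ideal 1 r -> jacobson_rad r.
Proof.
move=> Hr M [[M0 [MD MM]] [HM1 Hmax]]; apply: NNPP => HMr.
pose M' z := exists m s, M m /\ z = m + r * s.
have HM' : right_ideal M'.
  split; first by exists 0, 0; rewrite mulr0 addr0.
  split=> [u v [m1 [s1 [Hm1 ->]]] [m2 [s2 [Hm2 ->]]] | u q [m1 [s1 [Hm1 ->]]]].
    by exists (m1 + m2), (s1 + s2); rewrite mulrDr addrACA; split=> //; apply: MD.
  by exists (m1 * q), (s1 * q); rewrite mulrDl mulrA; split=> //; apply: MM.
have MM' u : M u -> M' u by exists u, 0; rewrite mulr0 addr0.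
have [HM'M|[m [s [Hm Em]]]] := Hmax M' HM' MM'.
  by apply/HMr/HM'M; exists 0, 1; rewrite mulr1 add0r.
have Hrs : arrow_ideal 1 (r * s) by apply: arrow_idealMr.
have Em' : 1 - r * s = m by rewrite Em addrK.
by apply: HM1; rewrite -(mul_one_sub_geom Hrs) Em'; apply: MM.
Qed.

Definition vertex_ideal t (z : L) : Prop :=
  exists b j, [/\ arrow_ideal 1 j, z = vertex_comb b + j & b t = 0].

Lemma vertex_ideal_right t : right_ideal (vertex_ideal t).
Proof.
split; [|split].
- exists (fun _ => 0), 0; split=> //; first exact: arrow_ideal0.
  by rewrite addr0 /vertex_comb big1 // => u _; rewrite scale0r.
- move=> _ _ [b1 [j1 [Hj1 -> Hb1]]] [b2 [j2 [Hj2 -> Hb2]]].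
  exists (fun u => b1 u + b2 u), (j1 + j2).
  by rewrite addrACA vertex_combD Hb1 Hb2 addr0; split=> //; apply: arrow_idealD.
- move=> _ q [b [j [Hj -> Hb]]]; have [c [jq [Hjq ->]]] := vertex_rad_decomp q.
  exists (fun u => b u * c u), (vertex_comb b * jq + j * (vertex_comb c + jq)).
  rewrite mulrDl [vertex_comb b * (_ + _)]mulrDr vertex_combM addrA Hb mul0r; split=> //.
  by apply: arrow_idealD; [apply: arrow_idealMl | apply: arrow_idealMr].
Qed.

Lemma vertex_ideal_maximal t : maximal_right_ideal (vertex_ideal t).
Proof.
have [M0 [MD MM]] := vertex_ideal_right t.
split; [by split | split].
  move=> [b [j [Hj E1 Hbt]]].
  have := @vertex_rad_coef_unique (fun _ => 1) b 0 j t (arrow_ideal0 _) Hj.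
  by rewrite addr0 vertex_comb1 Hbt => /(_ E1)/eqP; rewrite oner_eq0.
move=> N' [_ [ND NM]] HMN; case: (classic (exists u, N' u /\ ~ vertex_ideal t u)).
  move=> [u [Nu HMu]]; right; have [c [ju [Hju Eu]]] := vertex_rad_decomp u.
  have Hct : c t != 0 by apply: contra_notN HMu => /eqP Hc0; exists c, ju.
  have HMdu : vertex_ideal t (1 - (c t)^-1 *: u).
    exists (fun w => 1 - (c t)^-1 * c w), (- ((c t)^-1 *: ju)).
    split; [exact/arrow_idealN/arrow_idealZ | | by rewrite mulVf ?subrr].
    rewrite Eu -vertex_comb1 scalerDr opprD addrA; congr (_ + _).
    rewrite /vertex_comb scaler_sumr -sumrB; apply: eq_bigr => w _.
    by rewrite scalerBl scale1r scalerA.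
  have Ndu : N' ((c t)^-1 *: u) by rewrite -[u]mulr1 scalerAr; apply: NM.
  by have := ND _ _ (HMN _ HMdu) Ndu; rewrite subrK.
by move=> Hno; left=> u Nu; apply: NNPP => HMu; apply: Hno; exists u.
Qed.

Lemma jacobson_arrow_ideal r : jacobson_rad r -> arrow_ideal 1 r.
Proof.
move=> Hr; have [a [j [Hj Er]]] := vertex_rad_decomp r.
suff Ha t : a t = 0.
  by rewrite Er /vertex_comb big1 ?add0r // => t _; rewrite Ha scale0r.
have [b [jj [Hjj Er' Hbt]]] := Hr _ (vertex_ideal_maximal t).
by rewrite (vertex_rad_coef_unique t Hj Hjj (etrans (esym Er) Er')).
Qed.

Lemma in_corner_radP i l : in_corner_rad e i l <-> arrow_ideal 1 l /\ e i * l * e i = l.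
Proof.
split=> [[r [/jacobson_arrow_ideal Hr ->]] | [Hl El]].
  by split; [apply/arrow_idealMr/arrow_idealMl | rewrite !mulrA e_idem mulr_e_idem].
by exists l; split=> //; apply: arrow_ideal_jacobson.
Qed.

Lemma corner_through_ind (P : L -> Prop) A C B :
  (forall q, from_to q A B -> C \in verts q) ->
  P 0 -> (forall y z, P y -> P z -> P (y + z)) ->
  (forall u v, P (e A * u * e C * (e C * v * e B))) ->
  forall y, P (e A * y * e B).
Proof.
move=> HC P0 PD Puv y; have [c [Hc ->]] := comb_surj y.
rewrite /comb_val mulr_sumr mulr_suml big_seq.
apply: big_ind => // -[c0 p] /(allP Hc) Hp /=.
rewrite -scalerAr -scalerAl.
have [Hft|Hft] := boolP (from_to p A B); last by rewrite corner_path_img_eq0 // scaler0.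
rewrite (path_img_corner Hft).
have [s1 [s2 [H1 H2 ->]]] := path_img_split Hft (HC _ Hft).
rewrite -(path_img_corner H1) -(path_img_corner H2) scalerAl scalerAl scalerAr.
exact: Puv.
Qed.

Definition dsum_unit (t : Q0) : {ffun Q0 -> L} := [ffun s => if s == t then e t else 0].

Lemma dsum_mod_unit (S : {set Q0}) t : t \in S -> dsum_mod e S (dsum_unit t).
Proof.
move=> HtS s; rewrite ffunE; case: eqP => [->|_].
  by rewrite HtS; exists (e t); rewrite e_idem.
by case: (s \in S) => //; exists 0; rewrite mulr0.
Qed.

Lemma dsum_hom_expand (S : {set Q0}) (B : L -> Prop) (h : {ffun Q0 -> L} -> L) Y :
  rhom (@dsum_act k L Q0) (@ract k L) (dsum_mod e S) B h -> dsum_mod e S Y ->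
  h Y = \sum_(t in S) h (dsum_unit t) * Y t.
Proof.
move=> [_ [hD hA]] HY.
pose mask (r : seq Q0) := [ffun s => if s \in r then Y s else 0].
have Hmask r : dsum_mod e S (mask r).
  move=> s; rewrite ffunE; have := HY s.
  by case: (s \in S); case: (s \in r) => //; exists 0; rewrite mulr0.
suff Hr r : uniq r -> {subset r <= S} -> h (mask r) = \sum_(t <- r) h (dsum_unit t) * Y t.
  have EY : Y = mask (enum S).
    apply/ffunP=> s; rewrite ffunE mem_enum; have := HY s.
    by case: (s \in S).
  by rewrite [in LHS]EY Hr ?enum_uniq ?big_enum // => s; rewrite mem_enum.
elim: r => [|t r IH] /=.
  have E0 : mask [::] + mask [::] = mask [::] by apply/ffunP=> s; rewrite !ffunE addr0.
  by move=> _ _; rewrite big_nil; apply: (addrI (h (mask [::]))); rewrite -hD // E0 addr0.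
move=> /andP[Htr Hr] Hsub.
have HtS : t \in S by apply: Hsub; rewrite mem_head.
have [l Hl] : proj_mod e t (Y t) by have := HY t; rewrite HtS.
have Et : mask [:: t] = dsum_act (dsum_unit t) (Y t).
  apply/ffunP=> s; rewrite !ffunE inE; case: eqP => [->|_]; last by rewrite mul0r.
  by rewrite Hl e_idem_mulr.
have -> : mask (t :: r) = mask [:: t] + mask r.
  apply/ffunP=> s; rewrite !ffunE !inE; case: (eqVneq s t) => [->|_] /=.
    by rewrite (negPf Htr) addr0.
  by rewrite add0r.
rewrite big_cons hD // Et hA; last exact: dsum_mod_unit.
by rewrite IH // => s Hs; apply: Hsub; rewrite in_cons Hs orbT.
Qed.

Lemma factors_through_dsum_mul (S : {set Q0}) i j t (f : L -> L) (u v : L) :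
  t \in S -> e i * u = u -> e t * v = v -> (forall z, f z = u * v * z) ->
  factors_through_dsum e j i f S.
Proof.
move=> HtS Hu Hv Hf.
exists (fun z => [ffun s => if s == t then v * z else 0]), (fun Y => u * Y t).
split; [split; [|split] | split; [split; [|split] |]].
- move=> z _ s; rewrite ffunE; case: eqP => [->|_].
    by rewrite HtS; exists (v * z); rewrite mulrA Hv.
  by case: (s \in S) => //; exists 0; rewrite mulr0.
- by move=> y z _ _; apply/ffunP=> s; rewrite !ffunE; case: eqP; rewrite ?mulrDr ?addr0.
- move=> z r _; apply/ffunP=> s; rewrite /ract /dsum_act !ffunE.
  by case: eqP; rewrite ?mulrA ?mul0r.
- by move=> Y _; exists (u * Y t); rewrite mulrA Hu.
- by move=> Y Z _ _; rewrite ffunE mulrDr.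
- by move=> Y r _; rewrite /dsum_act /ract ffunE mulrA.
- by move=> z _; rewrite ffunE eqxx Hf mulrA.
Qed.

Section ConditionC.
(* [pos] and [unit_steps] encode (C)(a); of (C)(b) only the inclusions
   e_i Lambda e_j <= e_i Lambda x, x Lambda e_j are needed. *)
Variable pos : Q0 -> nat.
Hypothesis pos_inj : injective pos.
Hypothesis pos_arrow : unit_steps src tgt pos.
Hypothesis corner_arrowl : forall a, src a != tgt a ->
  forall u, exists l, e (src a) * u * e (tgt a) = e (src a) * l * x a.
Hypothesis corner_arrowr : forall a, src a != tgt a ->
  forall u, exists l, e (src a) * u * e (tgt a) = x a * l * e (tgt a).

Local Notation shortest := (shortest_qpath src tgt).
Local Notation between := (between pos).

Lemma shortest_factorl p i j : shortest p i j ->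
  forall y, exists s, e i * y * e j = e i * s * e i * pimg p.
Proof.
case: p => v s; elim: s v i => [|a s IH] v i Hsh.
  have [+ _] := Hsh; rewrite from_to_nil => /andP[/eqP-> /eqP->] y.
  by exists y; rewrite path_img_nil mulr_e_idem.
have [-> Ha Hloop Hsh' Hb] := shortest_qpath_cons pos_inj pos_arrow Hsh.
rewrite path_img_cons //; set P' := pimg _.
pose P z := exists s0, z = e i * s0 * e i * (x a * P').
apply: (corner_through_ind (P := P) (C := tgt a)).
- by move=> q Hq; apply: (between_vertex pos_inj pos_arrow Hq Hb).
- by exists 0; rewrite mulr0 !mul0r.
- by move=> _ _ [s1 ->] [s2 ->]; exists (s1 + s2); rewrite mulrDr !mulrDl.
move=> u w; have [s1 ->] := IH _ _ Hsh' w.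
have [l Hl] := corner_arrowl Hloop (u * e (tgt a) * s1); rewrite Ha in Hl.
have xi : e i * x a = x a by rewrite -Ha e_src_x.
exists l; rewrite [RHS]mulrA -(mulrA (e i * l)) xi -Hl.
by rewrite !mulrA mulr_e_idem.
Qed.

Lemma shortest_factorr p i j : shortest p i j ->
  forall y, exists s, e i * y * e j = pimg p * (e j * s * e j).
Proof.
case: p => v s; elim: s v i => [|a s IH] v i Hsh.
  have [+ _] := Hsh; rewrite from_to_nil => /andP[/eqP-> /eqP->] y.
  by exists y; rewrite path_img_nil !mulrA e_idem.
have [-> Ha Hloop Hsh' Hb] := shortest_qpath_cons pos_inj pos_arrow Hsh.
rewrite path_img_cons //; set P' := pimg _.
pose P z := exists s0, z = x a * P' * (e j * s0 * e j).
apply: (corner_through_ind (P := P) (C := tgt a)).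
- by move=> q Hq; apply: (between_vertex pos_inj pos_arrow Hq Hb).
- by exists 0; rewrite mulr0 !mul0r mulr0.
- by move=> _ _ [s1 ->] [s2 ->]; exists (s1 + s2); rewrite mulrDr !mulrDl mulrDr.
move=> u w; have [l Hl] := corner_arrowr Hloop u; rewrite Ha in Hl.
have [s1 Hs1] := IH _ _ Hsh' (l * e (tgt a) * w).
exists s1; rewrite Hl -[RHS]mulrA -Hs1 -(x_e_tgt a).
by rewrite !mulrA !mulr_e_idem.
Qed.

Lemma rad_arrow_to_arrow_rad a r : src a != tgt a -> jacobson_rad r ->
  exists r', jacobson_rad r' /\ e (src a) * r * x a = x a * r' * e (tgt a).
Proof.
move=> Hloop /jacobson_arrow_ideal Hr; set j := tgt a.
have [l Hl] := corner_arrowr Hloop (r * x a).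
have [c [l2 [Hl2 Hc]]] := corner_decomp j l.
have Exl : x a * l * e j = c *: x a + x a * (e j * l2 * e j).
  by rewrite -{1}(x_e_tgt a) -2!mulrA [e _ * (l * _)]mulrA Hc mulrDr -scalerAr x_e_tgt.
have Ex : e (src a) * r * x a = x a * l * e j.
  by rewrite -Hl !mulrA -(mulrA _ (x a)) x_e_tgt.
have Hc0 : c = 0.
  apply: (@arrow_ideal_scale_x _ a).
  rewrite -[c *: x a](addrK (x a * (e j * l2 * e j))) -Exl -Ex; apply: arrow_idealB.
  - by apply: (arrow_ideal_mul (m1 := 1)); [apply: arrow_idealMl | apply: arrow_ideal_x].
  - apply: (arrow_ideal_mul (m1 := 1)); first exact: arrow_ideal_x.
    exact/arrow_idealMr/arrow_idealMl.
exists (e j * l2 * e j); split.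
  by apply: arrow_ideal_jacobson; apply/arrow_idealMr/arrow_idealMl.
by rewrite Ex Exl Hc0 scale0r add0r -[RHS]mulrA mulr_e_idem.
Qed.

Lemma arrow_rad_to_rad_arrow a r : src a != tgt a -> jacobson_rad r ->
  exists r', jacobson_rad r' /\ x a * r * e (tgt a) = e (src a) * r' * x a.
Proof.
move=> Hloop /jacobson_arrow_ideal Hr; set i := src a.
have [l Hl] := corner_arrowl Hloop (x a * r).
have [c [l2 [Hl2 Hc]]] := corner_decomp i l.
have Exl : e i * l * x a = c *: x a + e i * l2 * e i * x a.
  by rewrite -{1}(e_src_x a) mulrA Hc mulrDl -scalerAl e_src_x.
have Ex : x a * r * e (tgt a) = e i * l * x a by rewrite -Hl !mulrA e_src_x.
have Hc0 : c = 0.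
  apply: (@arrow_ideal_scale_x _ a).
  rewrite -[c *: x a](addrK (e i * l2 * e i * x a)) -Exl -Ex; apply: arrow_idealB.
  - by apply/arrow_idealMr/(arrow_ideal_mul (m1 := 1)); first apply: arrow_ideal_x.
  - apply: (arrow_ideal_mul (m1 := 1)); last exact: arrow_ideal_x.
    exact/arrow_idealMr/arrow_idealMl.
exists (e i * l2 * e i); split.
  by apply: arrow_ideal_jacobson; apply/arrow_idealMr/arrow_idealMl.
by rewrite Ex Exl Hc0 scale0r add0r !mulrA e_idem.
Qed.

Lemma rad_arrow_iff a : src a != tgt a -> forall y,
  (exists r, jacobson_rad r /\ y = e (src a) * r * x a) <->
  (exists r, jacobson_rad r /\ y = x a * r * e (tgt a)).
Proof.
move=> Hloop y; split=> -[r [Hr ->]].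
  by have [r' [Hr' ->]] := rad_arrow_to_arrow_rad Hloop Hr; exists r'.
by have [r' [Hr' ->]] := arrow_rad_to_rad_arrow Hloop Hr; exists r'.
Qed.

Hypothesis shortest_path_img_neq0 : forall i j p, shortest p i j -> pimg p != 0.

Lemma shortest_unit_factorl p i j w : shortest p i j -> (exists l, w = e i * l * e j) ->
  exists a l, in_corner_rad e i l /\ w = (a *: e i + l) * pimg p.
Proof.
move=> Hp [l0 ->]; have [s1 ->] := shortest_factorl Hp l0.
have [a [l1 [Hl1 ->]]] := corner_decomp i s1.
exists a, (e i * l1 * e i); split=> //; apply/in_corner_radP.
by split; [apply/arrow_idealMr/arrow_idealMl | rewrite !mulrA e_idem mulr_e_idem].
Qed.

Lemma shortest_unit_factorr p i j w : shortest p i j -> (exists l, w = e i * l * e j) ->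
  exists a l, in_corner_rad e j l /\ w = pimg p * (a *: e j + l).
Proof.
move=> Hp [l0 ->]; have [s1 ->] := shortest_factorr Hp l0.
have [a [l1 [Hl1 ->]]] := corner_decomp j s1.
exists a, (e j * l1 * e j); split=> //; apply/in_corner_radP.
by split; [apply/arrow_idealMr/arrow_idealMl | rewrite !mulrA e_idem mulr_e_idem].
Qed.

Lemma shortest_path_coef p i j w : shortest p i j -> (exists l, w = e i * l * e j) ->
  exists a : k,
    (exists l, in_corner_rad e i l /\ w = (a *: e i + l) * pimg p) /\
    (exists l', in_corner_rad e j l' /\ w = pimg p * (a *: e j + l')) /\
    (forall (b : k) l, in_corner_rad e i l -> w = (b *: e i + l) * pimg p -> b = a) /\
    (forall (b : k) l', in_corner_rad e j l' -> w = pimg p * (b *: e j + l') -> b = a).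
Proof.
move=> Hp Hw; set P := pimg p.
have [Hft _] := Hp.
have unitl b l : (b *: e i + l) * P = b *: P + l * P.
  by rewrite mulrDl -scalerAl (from_to_e_path_img Hft).
have unitr b l : P * (b *: e j + l) = b *: P + P * l.
  by rewrite mulrDr -scalerAr (from_to_path_img_e Hft).
have coef_eq b b' y z : radspan P (z - y) -> b *: P + y = b' *: P + z -> b = b'.
  move=> Hyz /addr_eq_sub; rewrite -scalerBl => Ebb; apply/eqP; rewrite -subr_eq0.
  by apply/eqP/(radspan_scale_eq0 (shortest_path_img_neq0 Hp)); rewrite Ebb.
have [a [l [Hli Ew]]] := shortest_unit_factorl Hp Hw.
have [a' [l' [Hlj Ew']]] := shortest_unit_factorr Hp Hw.
have [[Hl _] [Hl' _]] := (proj1 (in_corner_radP i l) Hli, proj1 (in_corner_radP j l') Hlj).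
have Eaa' : a = a'.
  apply: (coef_eq _ _ (l * P) (P * l')); last by rewrite -unitl -unitr -Ew.
  by apply: radspanB; [apply: radspan_mulr | apply: radspan_mull].
exists a; split; [by exists l | split; [by exists l'; rewrite Eaa' | split]].
  move=> b l2 /in_corner_radP[Hl2 _] Ew2; apply: (coef_eq _ _ (l2 * P) (l * P)).
    by apply: radspanB; apply: radspan_mull.
  by rewrite -!unitl -Ew.
move=> b l2 /in_corner_radP[Hl2 _] Ew2; apply: (coef_eq _ _ (P * l2) (P * l')).
  by apply: radspanB; apply: radspan_mulr.
by rewrite -!unitr Eaa' -Ew' Ew2.
Qed.

Lemma radspan_outside p i j t z v : shortest p i j -> ~~ between i j t ->
  radspan (pimg p) (e i * z * e t * (e t * v * e j)).
Proof.
move=> Hp Hout.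
have Hit : i != t by apply: contraNneq Hout => <-; apply: betweenl.
have Hjt : j != t by apply: contraNneq Hout => <-; apply: betweenr.
case: (not_between Hout) => Hb.
- pose P y := radspan (pimg p) (y * (e t * v * e j)).
  move: z; apply: (corner_through_ind (P := P) (C := j)).
  + by move=> q Hq; apply: (between_vertex pos_inj pos_arrow Hq Hb).
  + by rewrite /P mul0r; apply: radspan0.
  + by move=> y1 y2 H1 H2; rewrite /P mulrDl; apply: radspanD.
  move=> u w; rewrite /P; have [s1 ->] := shortest_factorr Hp u.
  rewrite -2!mulrA; apply/radspan_mulr/arrow_idealMl/arrow_idealMr.
  exact: offdiag_rad.
- pose P y := radspan (pimg p) (e i * z * e t * y).
  move: v; apply: (corner_through_ind (P := P) (C := i)).
  + by move=> q Hq; apply: (between_vertex pos_inj pos_arrow Hq Hb).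
  + by rewrite /P mulr0; apply: radspan0.
  + by move=> y1 y2 H1 H2; rewrite /P mulrDr; apply: radspanD.
  move=> u w; rewrite /P; have [s1 ->] := shortest_factorl Hp w.
  rewrite 2!mulrA; apply/radspan_mull/arrow_idealMr/arrow_idealMr.
  exact: offdiag_rad.
Qed.

Lemma factors_through_dsum_between p i j (a : k) l (S : {set Q0}) :
  shortest p i j -> a != 0 -> in_corner_rad e i l ->
  factors_through_dsum e j i (fun u => (a *: e i + l) * pimg p * u) S ->
  [exists t in S, between i j t].
Proof.
move=> Hp Ha /in_corner_radP[Hl _] [g [h [[Hg1 [_ Hg3]] [Hh Hf]]]].
apply: contraT => /exists_inPn Hout.
have Hej : proj_mod e j (e j) by exists (e j); rewrite e_idem.
set Y := g (e j); have HY : dsum_mod e S Y := Hg1 _ Hej.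
have HYj t : Y t = Y t * e j.
  by move: (Hg3 _ (e j) Hej); rewrite /ract e_idem => /ffunP/(_ t); rewrite ffunE.
have Hw : radspan (pimg p) ((a *: e i + l) * pimg p).
  have := Hf _ Hej; rewrite -mulrA (from_to_path_img_e Hp.1) => ->.
  rewrite (dsum_hom_expand Hh HY).
  apply: big_ind; [exact: radspan0 | exact: radspanD |] => t HtS.
  have [z Hz] := proj1 Hh _ (dsum_mod_unit HtS).
  have [lt Hlt] : proj_mod e t (Y t) by have := HY t; rewrite HtS.
  have Eu : dsum_act (dsum_unit t) (e t) = dsum_unit t.
    by apply/ffunP=> s; rewrite !ffunE; case: eqP; rewrite ?e_idem ?mul0r.
  have Hzt : h (dsum_unit t) = h (dsum_unit t) * e t.
    by rewrite -[in LHS]Eu (proj2 (proj2 Hh)) //; apply: dsum_mod_unit.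
  by rewrite HYj Hlt Hzt Hz; apply: radspan_outside Hp (Hout t HtS).
have unitl : (a *: e i + l) * pimg p = a *: pimg p + l * pimg p.
  by rewrite mulrDl -scalerAl (from_to_e_path_img Hp.1).
have : radspan (pimg p) (a *: pimg p).
  by rewrite -[a *: _](addrK (l * pimg p)) -unitl; apply: radspanB Hw (radspan_mull _ Hl).
by move/(radspan_scale_eq0 (shortest_path_img_neq0 Hp))/eqP; rewrite (negPf Ha).
Qed.

Lemma factors_through_dsum_vertex p i j (a : k) l (S : {set Q0}) t :
  from_to p i j -> in_corner_rad e i l -> t \in S -> t \in verts p ->
  factors_through_dsum e j i (fun u => (a *: e i + l) * pimg p * u) S.
Proof.
move=> Hft /in_corner_radP[_ El] HtS Htp.
have [s1 [s2 [_ _ Ep]]] := path_img_split Hft Htp.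
apply: (@factors_through_dsum_mul S i j t _ ((a *: e i + l) * pimg (i, s1)) (pimg (t, s2))).
- exact: HtS.
- have eil : e i * l = l by rewrite -{1}El !mulrA e_idem El.
  by rewrite mulrA mulrDr -scalerAr e_idem eil.
- exact: (e_path_img (t, s2)).
- by move=> u; rewrite Ep !mulrA.
Qed.

Lemma factors_through_dsum_iff p q i j (a : k) l (S : {set Q0}) :
  shortest p i j -> shortest q j i -> a != 0 -> in_corner_rad e i l ->
  factors_through_dsum e j i (fun u => (a *: e i + l) * pimg p * u) S <->
  has (fun t => t \in S) (verts q).
Proof.
move=> Hp Hq Ha Hl; split.
  move/(factors_through_dsum_between Hp Ha Hl)/exists_inP=> [t HtS Hb].
  apply/hasP; exists t => //; apply: (between_vertex pos_inj pos_arrow Hq.1).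
  by rewrite between_sym.
move/hasP=> [t Htq HtS]; apply: (factors_through_dsum_vertex _ Hp.1 Hl HtS).
apply: (between_vertex pos_inj pos_arrow Hp.1).
by rewrite between_sym; apply: (shortest_qpath_between pos_inj pos_arrow Hq).
Qed.

End ConditionC.

End PathAlgebra.

Theorem lemma4p3 (k : closedFieldType) (Q0 Q1 : finType) (src tgt : Q1 -> Q0)
  (n : nat) (L : algType k) (e : Q0 -> L) (x : Q1 -> L) :
  is_presentation src tgt e x ->
  admissible_kernel src tgt e x ->
  cond_C src tgt e x n ->
  (* (1) *)
  (forall a : Q1, src a != tgt a ->
     forall y : L,
       (exists r, jacobson_rad r /\ y = e (src a) * r * x a) <->
       (exists r, jacobson_rad r /\ y = x a * r * e (tgt a)))
  /\
  (* (2) *)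
  (forall (i j : Q0) (p : qpath Q0 Q1) (w : L),
     shortest_qpath src tgt p i j ->
     (exists l, w = e i * l * e j) ->
     exists a : k,
       (exists l, in_corner_rad e i l /\ w = (a *: e i + l) * path_img e x p) /\
       (exists l', in_corner_rad e j l' /\ w = path_img e x p * (a *: e j + l')) /\
       (forall (b : k) l, in_corner_rad e i l ->
          w = (b *: e i + l) * path_img e x p -> b = a) /\
       (forall (b : k) l', in_corner_rad e j l' ->
          w = path_img e x p * (b *: e j + l') -> b = a))
  /\
  (* (3) *)
  (forall (i j : Q0) (p q : qpath Q0 Q1) (a : k) (l : L) (S : {set Q0}),
     shortest_qpath src tgt p i j ->
     shortest_qpath src tgt q j i ->
     a != 0 -> in_corner_rad e i l ->
     (factors_through_dsum e j i
        (fun u => (a *: e i + l) * path_img e x p * u) S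
      <-> has (fun t => t \in S) (qpath_vertices tgt q))).
Proof.
move=> [e_mul [e_sum [x_corner comb_surj]]] [[N [_ path_img_long]] comb_coef_short].
move=> [/loopless_iso_std_pos[pos [pos_inj pos_arrow]] [HCb path_img_neq0]].
have corner_arrowl a : src a != tgt a ->
    forall u, exists l, e (src a) * u * e (tgt a) = e (src a) * l * x a.
  by move=> Ha u; apply: (proj1 (proj2 (HCb a Ha) _)); exists u.
have corner_arrowr a : src a != tgt a ->
    forall u, exists l, e (src a) * u * e (tgt a) = x a * l * e (tgt a).
  by move=> Ha u; apply: (proj2 (proj1 (HCb a Ha) _)); exists u.
split; [|split].
- exact: (rad_arrow_iff e_mul x_corner comb_surj path_img_long comb_coef_short e_sum
            corner_arrowl corner_arrowr).
- move=> i j p w; exact: (shortest_path_coef e_mul x_corner comb_surj path_img_long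
    comb_coef_short e_sum pos_inj pos_arrow corner_arrowl corner_arrowr path_img_neq0).
- move=> i j p q a l S; exact: (factors_through_dsum_iff e_mul x_corner comb_surj
    path_img_long comb_coef_short e_sum pos_inj pos_arrow corner_arrowl corner_arrowr
    path_img_neq0).
Qed.
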